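(* Let $\mathcal{X}$ and $\mathcal{Y}$ be finite sets, let $\Pr$ be a probability distribution on $\mathcal{X}$, let $\delta:\mathcal{X}\times\mathcal{Y}\to\mathbb{R}$, and let $\bar\pi,\pi_1,\dots,\pi_m$ be stochastic policies, each $\pi_i$ having support for $\bar\pi$ and satisfying $\sigma^2_\delta(\bar\pi\|\pi_i)>0$. Let $\mathcal{D}=\bigcup_{i=1}^m\mathcal{D}^i$ be a log dataset in which, for each $i$, $\mathcal{D}^i$ consists of $n_i$ samples $(x^i_j,y^i_j,\delta^i_j,p^i_j)$, $j=1,\dots,n_i$, with $x^i_j\sim\Pr$, $y^i_j\sim\pi_i(\cdot\mid x^i_j)$, $\delta^i_j=\delta(x^i_j,y^i_j)$, $p^i_j=\pi_i(y^i_j\mid x^i_j)$, all draws independent. For $\lambda=(\lambda_1,\dots,\lambda_m)$ with $\lambda_i\ge0$ and $\sum_i\lambda_in_i=1$ let $$\hat U_\lambda(\bar\pi)=\sum_{i=1}^m\lambda_i\sum_{j=1}^{n_i}\frac{\delta^i_j\,\bar\pi(y^i_j\mid x^i_j)}{p^i_j},$$ and let $\hat U_{weight}(\bar\pi)$ denote $\hat U_\lambda(\bar\pi)$ with $\lambda_i=\lambda_i^*=\Big(\sigma^2_\delta(\bar\pi\|\pi_i)\sum_{j=1}^m\frac{n_j}{\sigma^2_\delta(\bar\pi\|\pi_j)}\Big)^{-1}$. Then for every such $\lambda$, $$\mathrm{Var}_{\mathcal{D}}[\hat U_{weight}(\bar\pi)]=\frac{1}{\sum_{i=1}^m\frac{n_i}{\sigma^2_\delta(\bar\pi\|\pi_i)}}\le\mathrm{Var}_{\mathcal{D}}[\hat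 U_\lambda(\bar\pi)].$$
   Context: A stochastic policy $\pi$ assigns to each $x\in\mathcal{X}$ a probability distribution $\pi(\cdot\mid x)$ on $\mathcal{Y}$. The utility is $U(\pi)=\sum_{x,y}\Pr(x)\pi(y\mid x)\delta(x,y)$. A policy $\pi$ has support for $\pi'$ if $\delta(x,y)\pi'(y\mid x)\neq0$ implies $\pi(y\mid x)>0$ for all $x,y$. For $\pi$ having support for $\bar\pi$, the divergence is $\sigma^2_\delta(\bar\pi\|\pi)=\mathrm{Var}_{x\sim\Pr,\,y\sim\pi(\cdot\mid x)}\big[\delta(x,y)\bar\pi(y\mid x)/\pi(y\mid x)\big]=\sum_{x,y}\frac{(\delta(x,y)\bar\pi(y\mid x))^2}{\pi(y\mid x)}\Pr(x)-U(\bar\pi)^2$. Variances are over the random draw of $\mathcal{D}$. *)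

From HB Require Import structures.
From mathcomp Require Import all_boot all_order all_algebra.
Set Implicit Arguments. Unset Strict Implicit. Unset Printing Implicit Defensive.
Import Order.TTheory GRing.Theory Num.Theory.
Local Open Scope ring_scope.

Section Defs.
Variables (R : realFieldType) (X Y : finType).

Definition is_distr (P : X -> R) : Prop :=
  (forall x, 0 <= P x) /\ \sum_x P x = 1.

(* A stochastic policy: pi x y = pi(y | x). *)
Definition is_policy (pi : X -> Y -> R) : Prop :=
  forall x, (forall y, 0 <= pi x y) /\ \sum_y pi x y = 1.

Definition utility (P : X -> R) (delta : X -> Y -> R) (pi : X -> Y -> R) : R :=
  \sum_x \sum_y P x * pi x y * delta x y.

Definition has_support (delta : X -> Y -> R) (pi pi' : X -> Y -> R) : Prop :=
  forall x y, delta x y * pi' x y != 0 -> 0 < pi x y.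

Definition divergence (P : X -> R) (delta : X -> Y -> R) (pibar pi : X -> Y -> R) : R :=
  let w x y := delta x y * pibar x y / pi x y in
  let mu := \sum_x \sum_y P x * pi x y * w x y in
  \sum_x \sum_y P x * pi x y * (w x y - mu) ^+ 2.

(* Log datasets: m loggers, logger i contributes n i samples.
   A dataset assigns to every sample index (i, j) a pair (x, y);
   delta^i_j and p^i_j are determined by it. *)
Definition sample_idx (m : nat) (n : 'I_m -> nat) : finType :=
  {i : 'I_m & 'I_(n i)}.

Definition sidx (m : nat) (n : 'I_m -> nat) (i : 'I_m) (j : 'I_(n i)) :
  sample_idx n := Tagged (fun i => 'I_(n i)) j.

Definition dataset (m : nat) (n : 'I_m -> nat) : finType :=
  {ffun sample_idx n -> (X * Y)%type}.

Definition data_prob (P : X -> R) (m : nat) (n : 'I_m -> nat)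
  (pis : 'I_m -> X -> Y -> R) (D : dataset n) : R :=
  \prod_(s : sample_idx n) (P (D s).1 * pis (tag s) (D s).1 (D s).2).

Definition data_E (P : X -> R) (m : nat) (n : 'I_m -> nat)
  (pis : 'I_m -> X -> Y -> R) (f : dataset n -> R) : R :=
  \sum_(D : dataset n) data_prob P pis D * f D.

Definition data_Var (P : X -> R) (m : nat) (n : 'I_m -> nat)
  (pis : 'I_m -> X -> Y -> R) (f : dataset n -> R) : R :=
  data_E P pis (fun D => (f D - data_E P pis f) ^+ 2).

Definition U_lambda (delta : X -> Y -> R) (pibar : X -> Y -> R) (m : nat)
  (n : 'I_m -> nat) (pis : 'I_m -> X -> Y -> R) (lambda : 'I_m -> R)
  (D : dataset n) : R :=
  \sum_(i < m) lambda i *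
    \sum_(j < n i)
      (let x := (D (sidx j)).1 in let y := (D (sidx j)).2 in
       delta x y * pibar x y / pis i x y).

Definition lambda_star (P : X -> R) (delta : X -> Y -> R) (pibar : X -> Y -> R)
  (m : nat) (n : 'I_m -> nat) (pis : 'I_m -> X -> Y -> R) (i : 'I_m) : R :=
  (divergence P delta pibar (pis i) *
     \sum_(k < m) ((n k)%:R / divergence P delta pibar (pis k)))^-1.

End Defs.

(* The law of a log dataset is a product measure over the sample indices, and
   U_lambda is a sum of functions of distinct samples; hence its variance is
   the sum of the per-sample variances, sum_i n_i lambda_i^2 sigma_i^2.  On the
   hyperplane sum_i lambda_i n_i = 1 this quadratic form is minimised by
   completing the square:
     sum_i n_i sigma_i^2 lambda_i^2 - 1/S = sum_i n_i sigma_i^2 (lambda_i - lambda*_i)^2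
   with S = sum_i n_i / sigma_i^2 and lambda*_i = 1 / (sigma_i^2 S). *)

From HB Require Import structures.
From mathcomp Require Import ring.
From mathcomp Require Import all_boot all_order all_algebra.
Import Order.TTheory GRing.Theory Num.Theory.
Local Open Scope ring_scope.

Set Implicit Arguments.
Unset Strict Implicit.

Section FiniteMean.
Variables (R : realFieldType) (T : finType).

Definition fin_mean (p g : T -> R) : R := \sum_t p t * g t.

Definition fin_var (p g : T -> R) : R :=
  \sum_t p t * (g t - fin_mean p g) ^+ 2.

Lemma fin_mean_centered (p g : T -> R) :
  \sum_t p t = 1 -> fin_mean p (fun t => g t - fin_mean p g) = 0.
Proof.
move=> p1; rewrite /fin_mean; under eq_bigr do rewrite mulrBr.
by rewrite sumrB -mulr_suml p1 mul1r subrr.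
Qed.

Lemma fin_varZ (p g : T -> R) (c : R) :
  fin_var p (fun t => c * g t) = c ^+ 2 * fin_var p g.
Proof.
rewrite /fin_var /fin_mean mulr_sumr; apply: eq_bigr => t _.
rewrite (eq_bigr (fun u => c * (p u * g u))) => [|u _]; last by rewrite mulrCA.
by rewrite -mulr_sumr -mulrBr exprMn mulrCA.
Qed.

End FiniteMean.

Section ProductExpectation.
Variables (R : realFieldType) (I T : finType) (q : I -> T -> R).
Hypothesis q_sum1 : forall s, \sum_t q s t = 1.

Definition prodE (F : {ffun I -> T} -> R) : R :=
  \sum_(D : {ffun I -> T}) (\prod_s q s (D s)) * F D.

Lemma prodE_ext (F G : {ffun I -> T} -> R) :
  (forall D, F D = G D) -> prodE F = prodE G.
Proof. by move=> FG; apply: eq_bigr => D _; rewrite FG. Qed.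

Lemma prodE_sum (J : finType) (F : J -> {ffun I -> T} -> R) :
  prodE (fun D => \sum_j F j D) = \sum_j prodE (F j).
Proof. by rewrite /prodE exchange_big; apply: eq_bigr => D _; rewrite mulr_sumr. Qed.

Lemma prodE_prod (A : pred I) (h : I -> T -> R) :
  prodE (fun D => \prod_(s | A s) h s (D s)) = \prod_(s | A s) fin_mean (q s) (h s).
Proof.
pose h1 s t := if A s then h s t else 1.
have mean_h1 s : fin_mean (q s) (h1 s) = if A s then fin_mean (q s) (h s) else 1.
  rewrite /h1; case: (A s) => //.
  by rewrite /fin_mean -[RHS](q_sum1 s); apply: eq_bigr => t _; rewrite mulr1.
rewrite big_mkcond (eq_bigr _ (fun s _ => esym (mean_h1 s))) bigA_distr_bigA.
by apply: eq_bigr => D _; rewrite big_split [X in _ * X]big_mkcond.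
Qed.

Lemma prodE_coord (s : I) (g : T -> R) :
  prodE (fun D => g (D s)) = fin_mean (q s) g.
Proof.
have := prodE_prod (pred1 s) (fun _ => g); rewrite big_pred1_eq => <-.
by apply: eq_bigr => D _; rewrite big_pred1_eq.
Qed.

Lemma prodE_coord2 (s r : I) (g h : T -> R) : s != r ->
  prodE (fun D => g (D s) * h (D r)) = fin_mean (q s) g * fin_mean (q r) h.
Proof.
move=> sr; pose gh k t := if k == s then g t else h t.
have prod_sr (F : I -> R) : \prod_(k | pred2 s r k) F k = F s * F r.
  rewrite (bigD1 s) /= ?eqxx // (big_pred1 r) // => k /=.
  by case: eqVneq => [->|_]; rewrite ?(negPf sr) ?andbT // eq_sym.
have := prodE_prod (pred2 s r) gh; rewrite prod_sr /gh eqxx eq_sym (negPf sr) => <-.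
by apply: eq_bigr => D _; rewrite prod_sr eqxx eq_sym (negPf sr).
Qed.

Lemma prodE_var_sum (f : I -> T -> R) :
  prodE (fun D => (\sum_s f s (D s) - prodE (fun D => \sum_s f s (D s))) ^+ 2) =
  \sum_s fin_var (q s) (f s).
Proof.
pose F (D : {ffun I -> T}) := \sum_s f s (D s).
pose g s t := f s t - fin_mean (q s) (f s).
have -> : prodE F = \sum_s fin_mean (q s) (f s).
  by rewrite prodE_sum; apply: eq_bigr => s _; rewrite prodE_coord.
have square_expand (D : {ffun I -> T}) :
    (F D - \sum_s fin_mean (q s) (f s)) ^+ 2 = \sum_s \sum_r g s (D s) * g r (D r).
  by rewrite -sumrB expr2 mulr_suml; apply: eq_bigr => s _; rewrite mulr_sumr.
rewrite (prodE_ext square_expand) prodE_sum; apply: eq_bigr => s _.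
rewrite prodE_sum (bigD1 s) //= big1 ?addr0 => [|r rs].
  by rewrite (prodE_coord s (fun t => g s t ^+ 2)).
by rewrite prodE_coord2 1?eq_sym // fin_mean_centered // mul0r.
Qed.

End ProductExpectation.

Section LogDataset.
Variables (R : realFieldType) (X Y : finType) (P : X -> R).
Variables (delta pibar : X -> Y -> R) (m : nat) (n : 'I_m -> nat).
Variable pis : 'I_m -> X -> Y -> R.
Hypothesis P_distr : is_distr P.
Hypothesis pis_policy : forall i, is_policy (pis i).

Definition logger_law (i : 'I_m) (t : X * Y) : R := P t.1 * pis i t.1 t.2.

Definition ips_weight (i : 'I_m) (t : X * Y) : R :=
  delta t.1 t.2 * pibar t.1 t.2 / pis i t.1 t.2.

Lemma logger_law_sum1 (i : 'I_m) : \sum_t logger_law i t = 1.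
Proof.
rewrite -(pair_bigA _ (fun x y => P x * pis i x y)) -(proj2 P_distr) /=.
by apply: eq_bigr => x _; rewrite -mulr_sumr (proj2 (pis_policy i x)) mulr1.
Qed.

Lemma divergence_fin_var (i : 'I_m) :
  divergence P delta pibar (pis i) = fin_var (logger_law i) (ips_weight i).
Proof. by rewrite /divergence /fin_var /fin_mean !pair_bigA. Qed.

Lemma sum_sample_idx (G : forall i, 'I_(n i) -> R) :
  \sum_(s : sample_idx n) G (tag s) (tagged s) = \sum_i \sum_(j < n i) G i j.
Proof. by rewrite (sig_big_dep xpredT (fun _ => xpredT) G); apply: eq_bigl. Qed.

Lemma U_lambda_sum_samples (lambda : 'I_m -> R) (D : dataset X Y n) :
  U_lambda delta pibar pis lambda D =
  \sum_(s : sample_idx n) lambda (tag s) * ips_weight (tag s) (D s).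
Proof.
pose G i (j : 'I_(n i)) := lambda i * ips_weight i (D (sidx j)).
rewrite (eq_bigr (fun s => G (tag s) (tagged s))) => [|[]//].
by rewrite sum_sample_idx; apply: eq_bigr => i _; rewrite mulr_sumr.
Qed.

Lemma data_Var_U_lambda (lambda : 'I_m -> R) :
  @data_Var R X Y P m n pis (U_lambda delta pibar pis lambda) =
  \sum_i (n i)%:R * (lambda i ^+ 2 * divergence P delta pibar (pis i)).
Proof.
pose law (s : sample_idx n) := logger_law (tag s).
pose f (s : sample_idx n) t := lambda (tag s) * ips_weight (tag s) t.
pose U := U_lambda delta pibar (n:=n) pis lambda.
have U_eq := U_lambda_sum_samples lambda.
have -> : data_Var P pis U = prodE law (fun D => (U D - prodE law U) ^+ 2) by [].
rewrite /U (prodE_ext law U_eq); under prodE_ext => D do rewrite U_eq.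
rewrite (prodE_var_sum (fun s => logger_law_sum1 (tag s)) f).
rewrite (sum_sample_idx (fun i _ =>
  fin_var (logger_law i) (fun t => lambda i * ips_weight i t))).
apply: eq_bigr => i _.
by rewrite sumr_const card_ord mulr_natl fin_varZ divergence_fin_var.
Qed.

End LogDataset.

Section InverseVarianceWeighting.
Variables (R : realFieldType) (m : nat) (n : 'I_m -> nat) (sg : 'I_m -> R).
Hypothesis sg_gt0 : forall i, 0 < sg i.

Let S := \sum_i (n i)%:R / sg i.

Let sg_neq0 (i : 'I_m) : sg i != 0 := lt0r_neq0 (sg_gt0 i).

Lemma weighted_var_inverse_weights :
  \sum_i (n i)%:R * ((sg i * S)^-1 ^+ 2 * sg i) = S^-1.
Proof.
have [S0|S_neq0] := eqVneq S 0.
  by rewrite S0 invr0; apply: big1 => i _; rewrite mulr0 invr0 expr0n mul0r mulr0.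
rewrite (eq_bigr (fun i => (n i)%:R / sg i * S^-2)) => [|i _]; last first.
  by field; rewrite S_neq0 sg_neq0.
by rewrite -mulr_suml -/S; field.
Qed.

Lemma weighted_var_ge (lambda : 'I_m -> R) :
  \sum_i lambda i * (n i)%:R = 1 ->
  S^-1 <= \sum_i (n i)%:R * (lambda i ^+ 2 * sg i).
Proof.
move=> lambda_sum1; have [S0|S_neq0] := eqVneq S 0.
  rewrite S0 invr0; apply: sumr_ge0 => i _.
  by rewrite mulr_ge0 ?ler0n // mulr_ge0 ?sqr_ge0 // ltW.
pose c := S^-1.
have square_complete : \sum_i (n i)%:R * (lambda i ^+ 2 * sg i) - c =
    \sum_i (n i)%:R * sg i * (lambda i - c / sg i) ^+ 2.
  have expand i : (n i)%:R * sg i * (lambda i - c / sg i) ^+ 2 =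
      (n i)%:R * (lambda i ^+ 2 * sg i) - 2 * c * (lambda i * (n i)%:R)
      + c ^+ 2 * ((n i)%:R / sg i).
    by field; rewrite sg_neq0.
  rewrite (eq_bigr _ (fun i _ => expand i)) big_split sumrB /= -!mulr_sumr.
  by rewrite lambda_sum1 -/S /c; field.
rewrite -subr_ge0 square_complete; apply: sumr_ge0 => i _.
by rewrite mulr_ge0 ?sqr_ge0 // mulr_ge0 ?ler0n // ltW.
Qed.

End InverseVarianceWeighting.

Theorem theorem6p4 (R : realFieldType) (X Y : finType)
  (P : X -> R) (delta : X -> Y -> R) (pibar : X -> Y -> R)
  (m : nat) (pis : 'I_m -> X -> Y -> R) (n : 'I_m -> nat) :
  is_distr P ->
  is_policy pibar ->
  (forall i, is_policy (pis i)) ->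
  (forall i, has_support delta (pis i) pibar) ->
  (forall i, 0 < divergence P delta pibar (pis i)) ->
  forall lambda : 'I_m -> R,
    (forall i, 0 <= lambda i) ->
    \sum_(i < m) lambda i * (n i)%:R = 1 ->
    @data_Var R X Y P m n pis (U_lambda delta pibar pis (lambda_star P delta pibar n pis))
      = (\sum_(i < m) ((n i)%:R / divergence P delta pibar (pis i)))^-1 /\
    (\sum_(i < m) ((n i)%:R / divergence P delta pibar (pis i)))^-1
      <= @data_Var R X Y P m n pis (U_lambda delta pibar pis lambda).
Proof.
move=> P_distr _ pis_policy _ div_gt0 lambda _ lambda_sum1.
rewrite !data_Var_U_lambda //; split.
  exact: weighted_var_inverse_weights.
exact: weighted_var_ge.
Qed.
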